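(* Let $\widehat{T}(n)=\max_{w\in\mathcal{W}_n}\mathbb{E}(T\mid w_0=w)$ denote the worst expected convergence time of the cooling process on configurations of length $n$. Then $\widehat{T}(n)=O(n^3)$.
   Context: A configuration of length $n$ is a word $w=w_1\cdots w_n$ over the alphabet $\{1,2\}$ with $|w|_1=|w|_2$ (as many letters $1$ as letters $2$); $\mathcal{W}_n$ denotes the set of configurations of length $n$. A flip at position $1\le i<n$ on $w$ exchanges $w_i$ and $w_{i+1}$, provided $w_i\ne w_{i+1}$. The configuration $w$ has a mismatch at position $i$ if $w_i=w_{i+1}$; $E(w)$ denotes the total number of mismatches of $w$. The cooling process is the Markov chain $(w_t)_{t\ge0}$ on $\mathcal{W}_n$ started at $w_0$ and defined by $w_{t+1}=w_t$ if $E(w_t)=0$, and otherwise $w_{t+1}$ is obtained from $w_t$ by performing a flip chosen uniformly at random among the flips on $w_t$ that do not increase the number of mismatches (i.e. flips producing $w'$ with $E(w')\le E(w_t)$). The convergence time is $T=\min\{t\ge0 : E(w_t)=0\}$. *)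

From HB Require Import structures.
From mathcomp Require Import all_boot all_order all_algebra.
From mathcomp Require Import all_classical all_reals all_analysis.
Set Implicit Arguments. Unset Strict Implicit. Unset Printing Implicit Defensive.
Import Order.TTheory GRing.Theory Num.Theory.

(* A word over {1,2} is a seq bool: true encodes letter 1, false letter 2.
   Positions are 0-based: position i of the paper is index i-1 here. *)

Definition config (n : nat) (w : seq bool) : bool :=
  (size w == n) && (count id w == count negb w).

Definition mism (w : seq bool) : nat :=
  count (fun i => nth false w i == nth false w i.+1) (iota 0 (size w).-1).

Definition flip (w : seq bool) (i : nat) : seq bool :=
  set_nth false (set_nth false w i (nth false w i.+1)) i.+1 (nth false w i).

Definition allowed (w : seq bool) (i : nat) : bool :=
  (nth false w i != nth false w i.+1) && (mism (flip w i) <= mism w).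

(* surv t w = P(T > t | w_0 = w) for the cooling process, defined by the
   first-step (Markov) decomposition: T > t+1 iff E(w_0) > 0 (so w_1 is a
   uniformly random allowed flip of w_0) and, from w_1, T > t. *)
Fixpoint surv (R : realType) (t : nat) (w : seq bool) : R :=
  match t with
  | 0 => if (0 < mism w)%N then 1 else 0
  | t'.+1 =>
      if (0 < mism w)%N then
        (\sum_(i < (size w).-1 | allowed w i) surv R t' (flip w i))
          / (#|[pred i : 'I_(size w).-1 | allowed w i]|%:R)
      else 0
  end%R.

(* E(T | w_0 = w) = sum_{t >= 0} P(T > t | w_0 = w), in the extended reals
   (it is +oo if T is infinite with positive probability). *)
Definition expT (R : realType) (w : seq bool) : \bar R :=
  (\sum_(0 <= t <oo) ((surv R t w)%:E))%E.

From HB Require Import structures.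
From mathcomp Require Import all_boot all_order all_algebra.
From mathcomp Require Import all_classical all_reals all_analysis.
From mathcomp Require Import zify ring lra.
Import Order.TTheory GRing.Theory Num.Theory.
Set Implicit Arguments. Unset Strict Implicit. Unset Printing Implicit Defensive.

(** With m = n - 1, let h_k be the height (#1 - #2) of the prefix of length k,
    A = sum_k |h_k| and Q = sum over the mismatches t of t (m - 1 - t).  The
    potential Phi = 4 m (m + 2) E + m A + Q is at most 15 n^3, and while E > 0
    one step of the cooling process lowers it by at least 4 in expectation: if
    some allowed flip lowers E, the first term outweighs all other changes;
    otherwise every allowed flip moves a mismatch by two positions, and along
    runs of mismatches the changes of Phi telescope to a nonpositive sum.  So
    Phi / 4 is a Lyapunov function and E(T) <= Phi(w_0) / 4 <= 4 n^3. *)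

Section Potential.
Local Open Scope ring_scope.

Definition indz (b : bool) : int := if b then 1 else 0.
Definition letterz (b : bool) : int := if b then 1 else -1.
Definition mism_at (w : seq bool) (t : nat) : bool := nth false w t == nth false w t.+1.
Definition height (w : seq bool) (k : nat) : int := \sum_(l < k) letterz (nth false w l).
Definition balanced (w : seq bool) : bool := height w (size w) == 0.
Definition area (w : seq bool) : int := \sum_(k < (size w).+1) `|height w k|.
Definition mism_weight (m t : nat) : int := (t * (m.-1 - t))%:Z.
Definition weighted_mism (w : seq bool) (f : nat -> int) : int :=
  \sum_(t < (size w).-1) indz (mism_at w t) * f t.
Definition mism_energy (w : seq bool) : int := weighted_mism w (mism_weight (size w).-1).

(* The factor 4 m (m + 2) lets a unit decrease of E outweigh the at most m
   other allowed flips, each raising the last two terms by at most 4 m + 4. *)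
Definition potential (w : seq bool) : int :=
  let m := (size w).-1 in
  4 * (m * (m + 2))%:Z * (mism w)%:Z + m%:Z * area w + mism_energy w.

Lemma heightS w k : height w k.+1 = height w k + letterz (nth false w k).
Proof. by rewrite /height big_ord_recr. Qed.

Lemma height0 w : height w 0 = 0.
Proof. by rewrite /height big_ord0. Qed.

Lemma sum_perturb_at (F G : nat -> int) (j N : nat) (x : int) :
  (forall k, F k = G k + (if k == j then x else 0)) ->
  \sum_(k < N) F k = \sum_(k < N) G k + (if (j < N)%N then x else 0).
Proof.
move=> FG; elim: N => [|N IH]; first by rewrite !big_ord0 ltn0 addr0.
rewrite !big_ord_recr /= IH FG.
case: (ltngtP j N) => h.
- by rewrite (ltn_trans h (ltnSn _)); ring.
- by rewrite ltnS leqNgt h; ring.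
- by rewrite h ltnSn; ring.
Qed.

Lemma nth_flip w i k : nth false (flip w i) k =
  if k == i.+1 then nth false w i else if k == i then nth false w i.+1 else nth false w k.
Proof. by rewrite /flip !nth_set_nth /= nth_set_nth. Qed.

Lemma size_flip w i : (i.+1 < size w)%N -> size (flip w i) = size w.
Proof.
move=> h; rewrite /flip !size_set_nth.
by rewrite !(maxn_idPr _) // ?size_set_nth ?(maxn_idPr _) // ltnW.
Qed.

Lemma mism_weighted w : (mism w)%:Z = weighted_mism w (fun _ => 1).
Proof.
rewrite /mism /weighted_mism.
have -> : count (fun i => nth false w i == nth false w i.+1) (iota 0 (size w).-1)
  = (\sum_(t < (size w).-1) (mism_at w t : nat))%N.
  rewrite -sum1_count big_mkcond /=.
  rewrite -(big_mkord xpredT (fun t => if mism_at w t then 1%N else 0%N)) /index_iota subn0.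
  by apply: eq_bigr => i _; rewrite /mism_at; case: (_ == _).
rewrite -natz natr_sum; apply: eq_bigr => i _ /=; rewrite /indz; case: (mism_at w i) => //.
Qed.

Lemma mism_at_flip w i t : nth false w i != nth false w i.+1 ->
  mism_at (flip w i) t = if (t == i.+1) || (t.+1 == i) then ~~ mism_at w t else mism_at w t.
Proof.
move=> hd; rewrite /mism_at !nth_flip.
case: (eqVneq t i.+1) => [->|h1].
  rewrite (_ : (i.+2 == i.+1) = false); last by lia.
  rewrite (_ : (i.+2 == i) = false); last by lia.
  rewrite ?eqxx /=.
  by move: hd; case: (nth false w i); case: (nth false w i.+1); case: (nth false w i.+2).
case: (eqVneq t.+1 i) hd => [<-|h2] hd.
  rewrite (_ : (t == t.+1) = false); last by lia.
  rewrite (_ : (t.+1 == t.+2) = false); last by lia.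
  rewrite ?eqxx /= ?orbT.
  by move: hd; case: (nth false w t); case: (nth false w t.+1); case: (nth false w t.+2).
rewrite /=.
case: (eqVneq t i) => [->|h3].
  rewrite eqxx /=.
  by move: hd; case: (nth false w i); case: (nth false w i.+1).
by rewrite eqSS (negbTE h3).
Qed.

Definition dmism_left w i : int := if (0 < i)%N then 1 - 2 * indz (mism_at w i.-1) else 0.
Definition dmism_right w i : int := if (i.+2 < size w)%N then 1 - 2 * indz (mism_at w i.+1) else 0.
Definition darea w i : int :=
  `|height w i.+1 + (letterz (nth false w i.+1) - letterz (nth false w i))| - `|height w i.+1|.

Lemma weighted_mism_flip w i f : (i.+1 < size w)%N -> nth false w i != nth false w i.+1 ->
  weighted_mism (flip w i) f = weighted_mism w f + dmism_left w i * f i.-1 + dmism_right w i * f i.+1.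
Proof.
move=> hs hd; rewrite /dmism_left /dmism_right !(fun_if (fun x => x * _)) !mul0r.
rewrite /weighted_mism size_flip //.
pose G1 k := indz (mism_at w k) * f k
   + (if k == i.-1 then (if (0 < i)%N then (1 - 2 * indz (mism_at w i.-1)) * f i.-1 else 0) else 0).
rewrite (@sum_perturb_at (fun k => indz (mism_at (flip w i) k) * f k) G1 i.+1 _
  ((1 - 2 * indz (mism_at w i.+1)) * f i.+1)); last first.
  move=> k; rewrite mism_at_flip // /G1.
  case: (eqVneq k i.+1) => [->|h1] /=.
    have -> : (i.+1 == i.-1) = false by lia.
    by rewrite /indz; case: (mism_at w i.+1) => /=; ring.
  case: (eqVneq k.+1 i) => [<-|h2] /=.
    rewrite eqxx /= /indz; case: (mism_at w k) => /=; ring.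
  case: (eqVneq k i.-1) => [h3|h3]; last by ring.
  have -> : (0 < i)%N = false by lia.
  by ring.
rewrite /G1 big_split /= (@sum_perturb_at (fun k => if k == i.-1 then _ else 0) (fun _ => 0) i.-1 _
  (if (0 < i)%N then (1 - 2 * indz (mism_at w i.-1)) * f i.-1 else 0)); last first.
  by move=> k; rewrite add0r.
rewrite big1_eq add0r.
have -> : (i.+1 < (size w).-1)%N = (i.+2 < size w)%N by lia.
case: (ltnP 0 i) => h0; last by rewrite !if_same.
have -> : (i.-1 < (size w).-1)%N by lia.
by [].
Qed.

Lemma height_flip w i k :
  height (flip w i) k = height w k
    + (if k == i.+1 then letterz (nth false w i.+1) - letterz (nth false w i) else 0).
Proof.
rewrite /height.
pose d := letterz (nth false w i.+1) - letterz (nth false w i).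
pose G1 k := letterz (nth false w k) + (if k == i then d else 0).
rewrite (@sum_perturb_at (fun l => letterz (nth false (flip w i) l)) G1 i.+1 k (- d)); last first.
  move=> l; rewrite nth_flip /G1.
  case: (eqVneq l i.+1) => [->|h1].
    have -> : (i.+1 == i) = false by lia.
    rewrite /d; ring.
  case: (eqVneq l i) => [->|h2]; rewrite /d; ring.
rewrite /G1 big_split /= (@sum_perturb_at (fun l => if l == i then d else 0) (fun _ => 0) i k d).
  by rewrite big1_eq add0r; case: (ltngtP k i.+1) => h; rewrite /d; ring.
by move=> l; rewrite add0r.
Qed.

Lemma area_flip w i : (i.+1 < size w)%N -> area (flip w i) = area w + darea w i.
Proof.
move=> hs; rewrite /area /darea size_flip //.
rewrite (@sum_perturb_at (fun k => `|height (flip w i) k|) (fun k => `|height w k|) i.+1 _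
  (`|height w i.+1 + (letterz (nth false w i.+1) - letterz (nth false w i))| - `|height w i.+1|)).
  have -> : (i.+1 < (size w).+1)%N by lia.
  by ring.
move=> k; rewrite height_flip; case: (eqVneq k i.+1) => [->|h] /=; [ring | by rewrite !addr0].
Qed.

Lemma mism_flip w i : (i.+1 < size w)%N -> nth false w i != nth false w i.+1 ->
  (mism (flip w i))%:Z = (mism w)%:Z + dmism_left w i + dmism_right w i.
Proof.
by move=> hs hd; rewrite !mism_weighted weighted_mism_flip // !mulr1.
Qed.

Lemma potential_flip w i : (i.+1 < size w)%N -> nth false w i != nth false w i.+1 ->
  let m := (size w).-1 in
  potential (flip w i) = potential w + 4 * (m * (m + 2))%:Z * (dmism_left w i + dmism_right w i)
     + m%:Z * darea w i + (dmism_left w i * mism_weight m i.-1 + dmism_right w i * mism_weight m i.+1).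
Proof.
move=> hs hd m.
rewrite /potential mism_flip // area_flip // /mism_energy weighted_mism_flip // size_flip // -/m.
ring.
Qed.

Lemma darea_le2 w i : nth false w i != nth false w i.+1 -> darea w i <= 2.
Proof.
rewrite /darea; case: (nth false w i); case: (nth false w i.+1) => //= _; rewrite /letterz; lia.
Qed.

Lemma allowed_flip_bound w i : (i.+1 < size w)%N -> allowed w i ->
  let m := (size w).-1 in
  dmism_left w i + dmism_right w i <= 0 /\
  potential (flip w i) - potential w + 4
    <= 4 * (m * (m + 2))%:Z * (dmism_left w i + dmism_right w i) + 4 * m%:Z + 4.
Proof.
move=> hs /andP[hd hle] m.
have hE : dmism_left w i + dmism_right w i <= 0.
  have := mism_flip hs hd; move: hle; lia.
split=> //.
rewrite potential_flip //= -/m.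
have h2 := darea_le2 hd.
suff hQ : dmism_left w i * mism_weight m i.-1 + dmism_right w i * mism_weight m i.+1 <= 2 * m%:Z.
  have : m%:Z * darea w i <= 2 * m%:Z by nia.
  lia.
move: hE; rewrite /dmism_left /dmism_right /mism_weight /m.
case: ifP => h0; case: ifP => h1; rewrite /indz;
  case: (mism_at w i.-1); case: (mism_at w i.+1); nia.
Qed.

Definition area_jump w t : int := `|height w t + 2 * letterz (nth false w t)| - `|height w t|.

(* wall_cost w t is the change of potential + 4 when a flip at t - 1 moves a
   mismatch from t to t - 2 without changing E. *)
Definition wall_cost w t : int :=
  let m := (size w).-1 in m%:Z * area_jump w t + 4 * t%:Z - 2 * m%:Z + 2.

Lemma potential_flip_neutral w i : (0 < i)%N -> (i.+2 < size w)%N ->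
  (allowed w i -> dmism_left w i + dmism_right w i = 0) ->
  indz (allowed w i) * (potential (flip w i) - potential w + 4) =
  indz (~~ mism_at w i && mism_at w i.+1) * wall_cost w i.+1
  - indz (~~ mism_at w i && mism_at w i.-1) * wall_cost w i.-1.
Proof.
move=> h0 hs hnd.
case: (eqVneq (nth false w i) (nth false w i.+1)) => hd.
  have -> : allowed w i = false by rewrite /allowed hd eqxx.
  by rewrite /mism_at hd eqxx /= /indz; ring.
have hs1 : (i.+1 < size w)%N by lia.
have hA : allowed w i = (dmism_left w i + dmism_right w i <= 0).
  rewrite /allowed hd /=; have := mism_flip hs1 hd.
  by case: leqP; case: lerP => //; lia.
move: hnd; rewrite hA potential_flip // /wall_cost /area_jump /darea.
rewrite /dmism_left /dmism_right /mism_weight /mism_at h0 hs /=.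
case: i h0 hs hs1 hd hA => [//|j] _ hs hs1 hd _ /=.
rewrite !heightS.
move: (height w j) => x.
move: (size w) hs hs1 => n hs hs1.
move: hd; case: (nth false w j); case: (nth false w j.+1); case: (nth false w j.+2);
  case: (nth false w j.+3) => //= _; rewrite /indz /letterz /=; nia.
Qed.

Definition wall_moves (B : nat -> bool) (H : nat -> int) (i : nat) : int :=
  indz (~~ B i && B i.+1) * H i.+1 - indz (~~ B i && B i.-1) * H i.-1.

Lemma sum_wall_moves (B : nat -> bool) (H : nat -> int) (k : nat) :
  \sum_(j < k) wall_moves B H j.+1 =
  indz (B k.+1) * H k.+1 - indz (B 0) * H 0
  + \sum_(t < k.+1) indz (B t && B t.+1) * (H t - H t.+1)
  + indz (B k && ~~ B k.+1) * H k - indz (B 1 && ~~ B 0) * H 1.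
Proof.
elim: k => [|k IH].
  rewrite big_ord0 big_ord1 /indz.
  by case: (B 0); case: (B 1) => /=; ring.
rewrite big_ord_recr /= IH [in RHS]big_ord_recr /= /wall_moves /=.
by rewrite /indz; case: (B k); case: (B k.+1); case: (B k.+2) => /=; ring.
Qed.

Lemma area_jump_mism_at w t : mism_at w t ->
  area_jump w t <= area_jump w t.+1.
Proof.
rewrite /mism_at /area_jump heightS => /eqP ->.
move: (height w t) => x; case: (nth false w t.+1); rewrite /letterz; lia.
Qed.

Lemma wall_cost_first_ge0 w : 0 <= indz (mism_at w 0) * wall_cost w 0.
Proof.
case: (mism_at w 0); rewrite /= ?mul0r // mul1r /wall_cost /area_jump height0 add0r.
by case: (nth false w 0); rewrite /letterz /=; lia.
Qed.

Lemma wall_cost_last_le0 w k : size w = k.+3 -> balanced w ->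
  indz (mism_at w k.+1) * wall_cost w k.+1 <= 0.
Proof.
move=> hk /eqP hn; case hb: (mism_at w k.+1); rewrite /= ?mul0r // mul1r.
move/eqP: hb => h1; rewrite /wall_cost /area_jump.
move: hn; rewrite hk !heightS -h1 /=.
move: (height w k + letterz (nth false w k)) => x.
by case: (nth false w k.+1); rewrite /letterz /=; lia.
Qed.

Lemma wall_cost_pair_le0 w t :
  indz (mism_at w t && mism_at w t.+1) * (wall_cost w t - wall_cost w t.+1) <= 0.
Proof.
case hb: (mism_at w t && mism_at w t.+1); rewrite /= ?mul0r // mul1r.
move/andP: hb => [/area_jump_mism_at hg _]; rewrite /wall_cost.
move: (area_jump w t) (area_jump w t.+1) hg => g1 g2 hg.
have : ((size w).-1)%:Z * g1 <= ((size w).-1)%:Z * g2 by apply: ler_wpM2l.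
lia.
Qed.

Section NeutralDrift.
Variables (w : seq bool) (k : nat).
Hypothesis size_w : size w = k.+3.
Hypothesis neutral : forall i, (i < (size w).-1)%N -> allowed w i ->
  dmism_left w i + dmism_right w i = 0.

Lemma neutral_first_blocked : allowed w 0 = false.
Proof.
apply/negP => ha; have := @neutral 0%N (ltac:(by rewrite size_w)) ha.
rewrite /dmism_left /dmism_right size_w /=.
by rewrite /indz; case: (mism_at w 1).
Qed.

Lemma neutral_last_blocked : allowed w k.+1 = false.
Proof.
apply/negP => ha; have := @neutral k.+1 (ltac:(by rewrite size_w)) ha.
rewrite /dmism_left /dmism_right size_w /= ltnn.
by rewrite /indz; case: (mism_at w k).
Qed.

Lemma neutral_no_left_entry : (mism_at w 1 && ~~ mism_at w 0) = false.
Proof.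
apply/negP => /andP[b1 b0].
have hd : nth false w 0 != nth false w 1 by exact: b0.
have := mism_flip (ltac:(by rewrite size_w) : (1 < size w)%N) hd.
rewrite /dmism_left /dmism_right size_w /= b1 /indz => hm.
have : allowed w 0 by rewrite /allowed hd /=; lia.
by rewrite neutral_first_blocked.
Qed.

Lemma neutral_no_right_entry : (mism_at w k && ~~ mism_at w k.+1) = false.
Proof.
apply/negP => /andP[b1 b0].
have hd : nth false w k.+1 != nth false w k.+2 by exact: b0.
have := mism_flip (ltac:(by rewrite size_w) : (k.+2 < size w)%N) hd.
rewrite /dmism_left /dmism_right size_w /= ltnn b1 /indz => hm.
have : allowed w k.+1 by rewrite /allowed hd /=; lia.
by rewrite neutral_last_blocked.
Qed.

Lemma drift_neutral : balanced w ->
  \sum_(i < (size w).-1) indz (allowed w i) * (potential (flip w i) - potential w + 4) <= 0.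
Proof.
move=> hn.
have -> : (size w).-1 = k.+2 by rewrite size_w.
rewrite big_ord_recl big_ord_recr /= neutral_first_blocked mul0r add0r.
rewrite (_ : bump 0 k = k.+1) // neutral_last_blocked mul0r addr0.
have -> : \sum_(i < k) indz (allowed w (bump 0 i)) * (potential (flip w (bump 0 i)) - potential w + 4)
    = \sum_(j < k) wall_moves (mism_at w) (wall_cost w) j.+1.
  apply: eq_bigr => j _; rewrite /bump /= add1n.
  have hj := ltn_ord j.
  rewrite potential_flip_neutral //; first by rewrite size_w; lia.
  by move=> ha; apply: neutral => //; rewrite size_w; lia.
rewrite sum_wall_moves neutral_no_left_entry neutral_no_right_entry /= !mul0r !subr0.
have := wall_cost_first_ge0 w; have := wall_cost_last_le0 size_w hn.
have : \sum_(t < k.+1) indz (mism_at w t && mism_at w t.+1) * (wall_cost w t - wall_cost w t.+1) <= 0.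
  by apply: sumr_le0 => t _; exact: wall_cost_pair_le0.
move: (indz _ * wall_cost w 0) (indz _ * wall_cost w k.+1) (\sum_(t < k.+1) _) => a b c.
lia.
Qed.

End NeutralDrift.

Lemma sum_allowed_dmism_le w (i0 : 'I_(size w).-1) : allowed w i0 ->
  dmism_left w i0 + dmism_right w i0 < 0 ->
  \sum_(i < (size w).-1) indz (allowed w i) * (dmism_left w i + dmism_right w i) <= -1.
Proof.
move=> a0 s0; rewrite (bigD1 i0) //= a0 mul1r.
have : \sum_(i < (size w).-1 | i != i0) indz (allowed w i) * (dmism_left w i + dmism_right w i) <= 0.
  apply: sumr_le0 => i _; case ha: (allowed w i); rewrite /= ?mul0r // mul1r.
  have hi : (i.+1 < size w)%N by have := ltn_ord i; lia.
  by have [] := allowed_flip_bound hi ha.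
move: (\sum_(i < _ | _) _) => S; lia.
Qed.

Lemma drift_strict w (i0 : 'I_(size w).-1) : allowed w i0 ->
  dmism_left w i0 + dmism_right w i0 < 0 ->
  \sum_(i < (size w).-1) indz (allowed w i) * (potential (flip w i) - potential w + 4) <= 0.
Proof.
move=> a0 s0; have := sum_allowed_dmism_le a0 s0; set m := (size w).-1 => hS.
have hb (i : 'I_m) : indz (allowed w i) * (potential (flip w i) - potential w + 4) <=
    4 * (m * (m + 2))%:Z * (indz (allowed w i) * (dmism_left w i + dmism_right w i))
    + (4 * m%:Z + 4).
  have hi : (i.+1 < size w)%N by have := ltn_ord i; rewrite /m; lia.
  case ha: (allowed w i); rewrite /= ?mul0r ?mulr0 ?add0r ?mul1r; last lia.
  have [_] := allowed_flip_bound hi ha; rewrite -/m; lia.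
apply: le_trans (ler_sum _ (fun i _ => hb i)) _.
rewrite big_split /= -mulr_sumr sumr_const card_ord -[_ *+ m]mulr_natr [m%:R]natz.
move: hS; move: (\sum_(i < m) _) => S hS.
have : (m * (m + 2))%:Z * (S + 1) <= 0 by apply: mulr_ge0_le0 => //; lia.
nia.
Qed.

Lemma balanced_mism_size w : balanced w -> (0 < mism w)%N -> (2 < size w)%N.
Proof.
move=> /eqP hn hE.
have hs2 : (1 < size w)%N by move: hE; rewrite /mism; case: (size w) => [|[|n]].
case: (ltngtP (size w) 2) => // h2; first by lia.
move: hE hn; rewrite /mism h2 /= /height big_ord_recr big_ord1 /=.
by case: (nth false w 0); case: (nth false w 1).
Qed.

Lemma drift_le0 w : balanced w -> (0 < mism w)%N ->
  \sum_(i < (size w).-1) indz (allowed w i) * (potential (flip w i) - potential w + 4) <= 0.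
Proof.
move=> hn hE; have hs := balanced_mism_size hn hE.
case: (boolP [exists i : 'I_(size w).-1, allowed w i && (dmism_left w i + dmism_right w i < 0)]).
  by case/existsP => i0 /andP[a0 s0]; exact: drift_strict a0 s0.
rewrite negb_exists => /forallP hall.
have hk : size w = (size w - 3).+3 by lia.
apply: (drift_neutral hk _ hn) => i hi ha.
have hi1 : (i.+1 < size w)%N by lia.
have [h _] := allowed_flip_bound hi1 ha.
have := hall (Ordinal hi); rewrite /= ha /=.
move: h; move: (dmism_left w i + dmism_right w i) => s; lia.
Qed.

Lemma height_le w k : `|height w k| <= k%:Z.
Proof.
elim: k => [|k IH]; first by rewrite height0.
rewrite heightS; move: IH; case: (nth false w k); rewrite /letterz; lia.
Qed.

Lemma area_bounds w : 0 <= area w <= ((size w).+1 * size w)%:Z.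
Proof.
apply/andP; split; first by apply: sumr_ge0 => k _.
apply: le_trans (_ : \sum_(k < (size w).+1) (size w)%:Z <= _).
  apply: ler_sum => k _; apply: le_trans (height_le w k) _; have := ltn_ord k; lia.
by rewrite sumr_const card_ord -mulr_natr natz; lia.
Qed.

Lemma mism_energy_bounds w : 0 <= mism_energy w <= ((size w).-1 * ((size w).-1 * (size w).-1))%:Z.
Proof.
apply/andP; split.
  apply: sumr_ge0 => t _; apply: mulr_ge0; first by case: (mism_at _ _).
  by rewrite /mism_weight.
apply: le_trans (_ : \sum_(t < (size w).-1) ((size w).-1 * (size w).-1)%:Z <= _).
  apply: ler_sum => t _; rewrite /indz /mism_weight; case: (mism_at w t); rewrite ?mul1r ?mul0r; nia.
by rewrite sumr_const card_ord -mulr_natr natz; lia.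
Qed.

Lemma mism_le w : (mism w <= (size w).-1)%N.
Proof. by rewrite /mism; apply: leq_trans (count_size _ _) _; rewrite size_iota. Qed.

Lemma potential_bounds w : 0 <= potential w <= 15 * (size w)%:Z ^+ 3.
Proof.
have := area_bounds w; have := mism_energy_bounds w; have := mism_le w.
rewrite /potential; move: (area w) (mism_energy w) (mism w) (size w) => H Q E [|n] /=.
  by move=> _ /andP[h1 h2] /andP[h3 h4]; rewrite !mul0r !add0r; lia.
move=> hE /andP[h1 h2] /andP[h3 h4]; rewrite !exprS expr0 mulr1.
apply/andP; split; nia.
Qed.

Lemma potential_ge4 w : (0 < mism w)%N -> 4 <= potential w.
Proof.
move=> hE; have := area_bounds w; have := mism_energy_bounds w; have := mism_le w.
rewrite /potential; move: (area w) (mism_energy w) hE; move: (mism w) (size w) => E n H Q hE.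
move=> hm /andP[h1 h2] /andP[h3 h4]; nia.
Qed.

Lemma balanced_flip w i : (i.+1 < size w)%N -> balanced (flip w i) = balanced w.
Proof.
move=> hs; rewrite /balanced size_flip // height_flip.
by rewrite (_ : (size w == i.+1) = false) ?addr0 //; lia.
Qed.

Lemma height_cons x s k : height (x :: s) k.+1 = letterz x + height s k.
Proof. by rewrite /height big_ord_recl. Qed.

Lemma height_size w : height w (size w) = (count id w)%:Z - (count negb w)%:Z.
Proof.
elim: w => [|x s IH]; first by rewrite height0.
rewrite /= height_cons IH; case: x => /=; rewrite /letterz; lia.
Qed.

Lemma config_balanced n w : config n w -> balanced w.
Proof. by case/andP=> _ /eqP hc; rewrite /balanced height_size hc subrr. Qed.

Lemma drift_allowed w : balanced w -> (0 < mism w)%N ->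
  \sum_(i < (size w).-1 | allowed w i) potential (flip w i)
   <= (#|[pred i : 'I_(size w).-1 | allowed w i]|)%:Z * (potential w - 4).
Proof.
move=> hn hE; have := drift_le0 hn hE.
have hK : \sum_(i < (size w).-1 | allowed w i) (1 : int) = (#|[pred i : 'I_(size w).-1 | allowed w i]|)%:Z.
  by rewrite sumr_const -natz.
rewrite -hK mulr_suml mul1r.
have -> : \sum_(i < (size w).-1) indz (allowed w i) * (potential (flip w i) - potential w + 4)
   = \sum_(i < (size w).-1 | allowed w i) potential (flip w i)
     - \sum_(i < (size w).-1 | allowed w i) (potential w - 4).
  rewrite -sumrB [in RHS]big_mkcond /=; apply: eq_bigr => i _; rewrite /indz; case: (allowed w i) => /=; ring.
by rewrite subr_le0.
Qed.

End Potential.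


Lemma surv_ge0 (R : realType) t w : (0 <= surv R t w)%R.
Proof.
elim: t w => [|t IH] w /=; first by case: ifP.
case: ifP => // _; apply: divr_ge0; last exact: ler0n.
by apply: sumr_ge0 => i _; exact: IH.
Qed.

Section LyapunovBound.
Local Open Scope ring_scope.
Variables (R : realType) (P : seq bool -> R) (inv : pred (seq bool)).
Hypothesis P_ge0 : forall w, inv w -> 0 <= P w.
Hypothesis P_ge1 : forall w, inv w -> (0 < mism w)%N -> 1 <= P w.
Hypothesis inv_flip : forall w i, (i.+1 < size w)%N -> inv w -> inv (flip w i).
Hypothesis P_drift : forall w, inv w -> (0 < mism w)%N ->
  \sum_(i < (size w).-1 | allowed w i) P (flip w i)
   <= #|[pred i : 'I_(size w).-1 | allowed w i]|%:R * (P w - 1).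

Lemma sum_surv_le t w : inv w -> \sum_(s < t.+1) surv R s w <= P w.
Proof.
elim: t w => [|t IH] w hw.
  by rewrite big_ord1 /=; case: ifP => hE; [exact: P_ge1 | exact: P_ge0].
rewrite big_ord_recl (eq_bigr (fun i : 'I_t.+1 => surv R i.+1 w)); last first.
  by move=> i _; rewrite lift0.
rewrite /=; case: ifP => hE; last by rewrite big1_eq add0r; exact: P_ge0.
rewrite -mulr_suml exchange_big /=.
set K := #|_|%:R; have hK : 0 <= K by exact: ler0n.
have hsum : \sum_(j < (size w).-1 | allowed w j) \sum_(i < t.+1) surv R i (flip w j)
    <= K * (P w - 1).
  apply: le_trans (P_drift hw hE); apply: ler_sum => j _; apply/IH/inv_flip => //.
  by have := ltn_ord j; lia.
have := P_ge1 hw hE.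
have [->|hK0] := eqVneq K 0; first by rewrite invr0 mulr0; lra.
suff : (\sum_(j < (size w).-1 | allowed w j) \sum_(i < t.+1) surv R i (flip w j)) / K
    <= P w - 1 by lra.
by rewrite ler_pdivrMr ?lt_def ?hK0 // mulrC.
Qed.

Lemma expT_le w : inv w -> (expT R w <= (P w)%:E)%E.
Proof.
move=> hw; apply: lime_le.
  by apply: is_cvg_nneseries => n _ _; rewrite lee_fin; exact: surv_ge0.
apply: nearW => n; rewrite sumEFin lee_fin.
case: n => [|t]; first by rewrite big_geq //; exact: P_ge0.
by rewrite big_mkord; exact: sum_surv_le.
Qed.

End LyapunovBound.

Section ScaledPotential.
Local Open Scope ring_scope.
Variable R : realType.

Definition scaled_potential (w : seq bool) : R := (potential w)%:~R / 4.

Lemma scaled_potential_ge0 w : 0 <= scaled_potential w.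
Proof.
have /andP[h _] := potential_bounds w.
by rewrite /scaled_potential; apply: divr_ge0; [rewrite ler0z | ].
Qed.

Lemma scaled_potential_ge1 w : (0 < mism w)%N -> 1 <= scaled_potential w.
Proof.
move=> hE; have h := potential_ge4 hE.
have : (4 : R) <= (potential w)%:~R by rewrite (_ : (4 : R) = (4 : int)%:~R) // ler_int.
rewrite /scaled_potential => h'; lra.
Qed.

Lemma scaled_potential_le w : scaled_potential w <= 4 * (size w)%:R ^+ 3.
Proof.
have /andP[_ h] := potential_bounds w.
have : (potential w)%:~R <= ((15 * (size w)%:Z ^+ 3 : int))%:~R :> R by rewrite ler_int.
rewrite rmorphM rmorphXn /= (_ : ((size w)%:Z)%:~R = (size w)%:R :> R) //.
have h3 : 0 <= (size w)%:R ^+ 3 :> R by apply: exprn_ge0; exact: ler0n.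
move: ((size w)%:R ^+ 3 : R) h3 => x hx.
rewrite /scaled_potential; lra.
Qed.

Lemma scaled_drift w : balanced w -> (0 < mism w)%N ->
  \sum_(i < (size w).-1 | allowed w i) scaled_potential (flip w i)
   <= #|[pred i : 'I_(size w).-1 | allowed w i]|%:R * (scaled_potential w - 1).
Proof.
move=> hn hE; have := drift_allowed hn hE.
rewrite -(ler_int R) rmorph_sum /= rmorphM rmorphB /=.
move: (#|_|) => K.
rewrite /scaled_potential -mulr_suml.
move: (\sum_(i < _ | _) _) => S.
rewrite (_ : (K%:Z)%:~R = K%:R :> R) //.
move: (K%:R : R) (ler0n R K) => k hk h.
have -> : k * ((potential w)%:~R / 4 - 1) = (k * ((potential w)%:~R - (4 : int)%:~R)) / 4 by field.
by apply: ler_wpM2r => //; rewrite invr_ge0.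
Qed.

Lemma expT_le_scaled_potential w : balanced w -> (expT R w <= (scaled_potential w)%:E)%E.
Proof.
apply: expT_le => {w} [w _ | w _ | w i hi | w]; first exact: scaled_potential_ge0.
- exact: scaled_potential_ge1.
- by rewrite balanced_flip.
- exact: scaled_drift.
Qed.

End ScaledPotential.

Theorem theorem1 (R : realType) :
  exists (C : R) (N : nat), forall (n : nat) (w : seq bool),
    (N <= n)%N -> config n w ->
    (expT R w <= (C * (n%:R) ^+ 3)%:E)%E.
Proof.
exists 4%R, 0%N => n w _ hc.
have /andP[/eqP <- _] := hc.
apply: le_trans (expT_le_scaled_potential R (config_balanced hc)) _.
by rewrite lee_fin; exact: scaled_potential_le.
Qed.
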